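(* Let $G=(\mathcal{V},\mathcal{C})$ and let $G^M=(\mathcal{V}^M,\mathcal{E}^M)$ be a marginal polytope diagram of $G$. Then: (1) for all $c,s,t\in\mathcal{V}^M$ with $t\subsetneq s\subsetneq c$, if $(c\to s)\in\mathcal{E}^M$ then $(c\to t)\Leftrightarrow(s\to t)$; (2) if $(c\to s_1),(c\to s_2)\in\mathcal{E}^M$, then for every $t\in\mathcal{V}^M$ with $t\subsetneq s_1$ and $t\subsetneq s_2$, $(s_1\to t)\Leftrightarrow(s_2\to t)$.
   Context: $\mathcal{V}=\{1,\dots,n\}$, each $x_i$ ranges over a finite set, $\mathbf{x}_s=(x_i)_{i\in s}$; $\mathcal{C}$ is a collection of subsets of $\mathcal{V}$. A marginal polytope diagram of $G=(\mathcal{V},\mathcal{C})$ is a pair $G^M=(\mathcal{V}^M,\mathcal{E}^M)$ with $\mathcal{C}\subseteq\mathcal{V}^M\subseteq 2^{\mathcal{V}}$ and $\mathcal{E}^M$ a set of directed edges $(c\to s)$ with $c,s\in\mathcal{V}^M$ and $s\subseteq c$ (edges $(c\to c)$ allowed). For a set $E$ of pairs $(c\to s)$ with $s\subseteq c$, let $P(E)$ be the set of families $\boldsymbol\mu=(\mu_c)_{c\in\mathcal{C}}$ of real functions $\mu_c(\mathbf{x}_c)$ for which there exist real functions $\mu_v(\mathbf{x}_v)$ for all other subsets $v\subseteq\mathcal{V}$ with $\sum_{\mathbf{x}_{c\setminus s}}\mu_c(\mathbf{x}_c)=\mu_s(\mathbf{x}_s)$ for all $(c\to s)\in E$ and all $\mathbf{x}_s$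 (i.e. $\{\boldsymbol\mu\mid\cdot\}$ denotes the set of $\boldsymbol\mu$ satisfying the constraints for some values of the auxiliary variables). Edge equivalence: for $c_1,c_2,t\in\mathcal{V}^M$ with $t\subseteq c_1$, $t\subseteq c_2$, let $E_0=\mathcal{E}^M\setminus\{(\hat c\to t):\hat c\in\mathcal{V}^M,\ t\subseteq\hat c\}$; the edges $(c_1\to t)$ and $(c_2\to t)$ (not necessarily in $\mathcal{E}^M$) are equivalent w.r.t. $G^M$, written $(c_1\to t)\Leftrightarrow(c_2\to t)$, if $P(E_0\cup\{(c_1\to t)\})=P(E_0\cup\{(c_2\to t)\})$. *)

From mathcomp Require Import all_boot all_order all_algebra.
From mathcomp Require Import reals.
Set Implicit Arguments. Unset Strict Implicit. Unset Printing Implicit Defensive.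
Import Order.TTheory GRing.Theory Num.Theory.
Local Open Scope ring_scope.

(* Variables are 'I_n; variable i ranges over the finite set X i, a subset of
   a common finite type T (any finite family of finite sets embeds this way).
   A configuration x_s of the variables in s : {set 'I_n} is encoded as a
   finite function f : 'I_n -> option T with f i \in X i for i \in s and
   f i = None for i \notin s. *)
Definition cfg (n : nat) (T : finType) := {ffun 'I_n -> option T}.

Definition valid_cfg (n : nat) (T : finType) (X : 'I_n -> {set T})
  (s : {set 'I_n}) (f : cfg n T) : bool :=
  [forall i, if i \in s then (if f i is Some x then x \in X i else false)
             else f i == None].

Definition restr (n : nat) (T : finType) (s : {set 'I_n}) (f : cfg n T) : cfg n T :=
  [ffun i => if i \in s then f i else None].

Definition marg_cons (R : realType) (n : nat) (T : finType) (X : 'I_n -> {set T})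
  (c s : {set 'I_n}) (muc mus : cfg n T -> R) : Prop :=
  forall x : cfg n T, valid_cfg X s x ->
    \sum_(y : cfg n T | valid_cfg X c y && (restr s y == x)) muc y = mus x.

(* mu \in P(E): mu is a family indexed by C (values at v \notin C are ignored);
   there exist functions for all other subsets satisfying the constraints. *)
Definition inP (R : realType) (n : nat) (T : finType) (X : 'I_n -> {set T})
  (C : {set {set 'I_n}}) (E : {set {set 'I_n} * {set 'I_n}})
  (mu : {set 'I_n} -> cfg n T -> R) : Prop :=
  exists nu : {set 'I_n} -> cfg n T -> R,
    (forall c, c \in C -> forall x, nu c x = mu c x) /\
    (forall e, e \in E -> marg_cons X e.1 e.2 (nu e.1) (nu e.2)).

Definition sameP (R : realType) (n : nat) (T : finType) (X : 'I_n -> {set T})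
  (C : {set {set 'I_n}}) (E1 E2 : {set {set 'I_n} * {set 'I_n}}) : Prop :=
  forall mu : {set 'I_n} -> cfg n T -> R, inP X C E1 mu <-> inP X C E2 mu.

Definition is_mpd (n : nat) (C VM : {set {set 'I_n}})
  (EM : {set {set 'I_n} * {set 'I_n}}) : Prop :=
  C \subset VM /\
  (forall e, e \in EM -> [/\ e.1 \in VM, e.2 \in VM & e.2 \subset e.1]).

Definition E0 (n : nat) (VM : {set {set 'I_n}}) (EM : {set {set 'I_n} * {set 'I_n}})
  (t : {set 'I_n}) : {set {set 'I_n} * {set 'I_n}} :=
  [set e in EM | ~~ [&& e.1 \in VM, t \subset e.1 & e.2 == t]].

Definition edge_equiv (R : realType) (n : nat) (T : finType) (X : 'I_n -> {set T})
  (C VM : {set {set 'I_n}}) (EM : {set {set 'I_n} * {set 'I_n}})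
  (c1 c2 t : {set 'I_n}) : Prop :=
  sameP R X C (E0 VM EM t :|: [set (c1, t)]) (E0 VM EM t :|: [set (c2, t)]).

From Pilot Require Import Defs.
From mathcomp Require Import all_boot all_order all_algebra.
From mathcomp Require Import reals.
Set Implicit Arguments. Unset Strict Implicit. Unset Printing Implicit Defensive.
Import Order.TTheory GRing.Theory Num.Theory.
Local Open Scope ring_scope.

(* Marginalization is transitive: if mu_s is the marginal of mu_c, then the
   marginal of mu_s on t is the marginal of mu_c on t (sum first over the
   variables of c \ s, then over those of s \ t).  Hence, once (c -> s) is a
   constraint, (c -> t) and (s -> t) impose the same condition, and so do
   (s1 -> t) and (s2 -> t) for two constraints (c -> s1), (c -> s2). *)

Lemma restr_restr (n : nat) (T : finType) (s t : {set 'I_n}) (z : cfg n T) :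
  t \subset s -> restr t (restr s z) = restr t z.
Proof.
move=> sub_ts; apply/ffunP => i; rewrite !ffunE.
by case it: (i \in t); rewrite // (subsetP sub_ts i it).
Qed.

Lemma valid_restr (n : nat) (T : finType) (X : 'I_n -> {set T})
  (s c : {set 'I_n}) (z : cfg n T) :
  s \subset c -> valid_cfg X c z -> valid_cfg X s (restr s z).
Proof.
move=> sub_sc /forallP zc; apply/forallP => i; rewrite ffunE.
by case i_s: (i \in s); move: (zc i); rewrite // (subsetP sub_sc i i_s).
Qed.

Section Marginals.

Variables (R : realType) (n : nat) (T : finType) (X : 'I_n -> {set T}).

Definition marg (c t : {set 'I_n}) (mu : cfg n T -> R) (x : cfg n T) : R :=
  \sum_(y : cfg n T | valid_cfg X c y && (restr t y == x)) mu y.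

Lemma marg_tower (c s t : {set 'I_n}) (muc mus : cfg n T -> R) :
  t \subset s -> s \subset c -> marg_cons X c s muc mus ->
  marg s t mus =1 marg c t muc.
Proof.
move=> sub_ts sub_sc cs x; symmetry; rewrite /marg.
rewrite (partition_big (restr s) (fun y => valid_cfg X s y && (restr t y == x)));
  last first.
  move=> z /andP[zc /eqP <-].
  by rewrite (valid_restr sub_sc zc) restr_restr ?eqxx.
apply: eq_bigr => y /andP[ys /eqP yx]; rewrite -(cs y ys).
apply: eq_bigl => z; case: (valid_cfg X c z) => //=.
case: (restr s z =P y) => [zy|]; last by rewrite andbF.
by rewrite -(restr_restr z sub_ts) zy yx !eqxx.
Qed.

Lemma marg_cons_tower (c s t : {set 'I_n}) (muc mus mut : cfg n T -> R) :
  t \subset s -> s \subset c -> marg_cons X c s muc mus ->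
  marg_cons X s t mus mut <-> marg_cons X c t muc mut.
Proof.
move=> sub_ts sub_sc cs; have tower := marg_tower sub_ts sub_sc cs.
by split=> st x xt; rewrite -st //; [symmetry|]; apply: tower.
Qed.

Lemma forall_setU1 (E : {set {set 'I_n} * {set 'I_n}}) a
    (P : {set 'I_n} * {set 'I_n} -> Prop) :
  (forall e, e \in E :|: [set a] -> P e) <-> (forall e, e \in E -> P e) /\ P a.
Proof.
split=> [PEa | [PE Pa] e]; last by rewrite in_setU in_set1 => /orP[/PE | /eqP->].
by split=> [e eE|]; apply: PEa; rewrite in_setU ?eE // in_set1 eqxx orbT.
Qed.

Lemma sameP_setU1 (C : {set {set 'I_n}}) (E : {set {set 'I_n} * {set 'I_n}}) a b :
  (forall nu : {set 'I_n} -> cfg n T -> R,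
     (forall e, e \in E -> marg_cons X e.1 e.2 (nu e.1) (nu e.2)) ->
     marg_cons X a.1 a.2 (nu a.1) (nu a.2) <-> marg_cons X b.1 b.2 (nu b.1) (nu b.2)) ->
  Defs.sameP R X C (E :|: [set a]) (E :|: [set b]).
Proof.
move=> ab_equiv mu; rewrite /inP.
by split=> -[nu [nuC /forall_setU1[nuE nu_ab]]]; exists nu;
  split=> //; apply/forall_setU1; split=> //; apply/(ab_equiv nu nuE).
Qed.

End Marginals.

Lemma mem_E0 (n : nat) (VM : {set {set 'I_n}}) (EM : {set {set 'I_n} * {set 'I_n}})
  (t c s : {set 'I_n}) : (c, s) \in EM -> t \proper s -> (c, s) \in E0 VM EM t.
Proof.
move=> cs_EM prop_ts.
have s_neq_t : s != t by apply: contraTneq prop_ts => ->; rewrite properxx.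
by rewrite inE cs_EM /= (negbTE s_neq_t) !andbF.
Qed.

Theorem proposition7 (R : realType) (n : nat) (T : finType) (X : 'I_n -> {set T})
  (C VM : {set {set 'I_n}}) (EM : {set {set 'I_n} * {set 'I_n}}) :
  is_mpd C VM EM ->
  (forall c s t : {set 'I_n}, c \in VM -> s \in VM -> t \in VM ->
     t \proper s -> s \proper c -> (c, s) \in EM ->
     edge_equiv R X C VM EM c s t) /\
  (forall c s1 s2 : {set 'I_n}, (c, s1) \in EM -> (c, s2) \in EM ->
     forall t : {set 'I_n}, t \in VM -> t \proper s1 -> t \proper s2 ->
     edge_equiv R X C VM EM s1 s2 t).
Proof.
move=> [_ EM_sub]; split.
- move=> c s t _ _ _ prop_ts prop_sc cs_EM; apply: sameP_setU1 => nu nuE /=.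
  have cs := nuE _ (mem_E0 VM cs_EM prop_ts).
  by rewrite (marg_cons_tower _ (proper_sub prop_ts) (proper_sub prop_sc) cs).
- move=> c s1 s2 cs1_EM cs2_EM t _ prop_ts1 prop_ts2; apply: sameP_setU1 => nu nuE /=.
  have [_ _ sub_s1c] := EM_sub _ cs1_EM; have [_ _ sub_s2c] := EM_sub _ cs2_EM.
  have cs1 := nuE _ (mem_E0 VM cs1_EM prop_ts1).
  have cs2 := nuE _ (mem_E0 VM cs2_EM prop_ts2).
  rewrite (marg_cons_tower _ (proper_sub prop_ts1) sub_s1c cs1).
  by rewrite (marg_cons_tower _ (proper_sub prop_ts2) sub_s2c cs2).
Qed.
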